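(* Let $X$ be a super $X$-set parameter, let $G$ be a graph, and let $R\subseteq V(G)$. Define $\nu_R$ on the $X$-sets of $G$ by $\nu_R(S)=S\ominus R$. Then $\nu_R$ is a graph automorphism of $\mathfrak{X}(G)$ if and only if $R$ is $X$-irrelevant.
   Context: All graphs are finite, simple, undirected, with nonempty vertex set. A super $X$-set parameter $X$ assigns to each graph $G$ a family of subsets of $V(G)$, called the $X$-sets of $G$, such that: every graph isomorphism maps $X$-sets to $X$-sets; every graph has at least one $X$-set; and (Superset) if $S$ is an $X$-set of $G$ and $S\subseteq S'\subseteq V(G)$, then $S'$ is an $X$-set of $G$. The $X$-TAR graph $\mathfrak{X}(G)$ has as vertices the $X$-sets of $G$, with $S_1S_2$ an edge iff $|S_1\ominus S_2|=1$; $\ominus$ is symmetric difference. A vertex $v$ is $X$-irrelevant if $v$ belongs to no minimal (w.r.t. inclusion) $X$-set of $G$; a set $R$ is $X$-irrelevant if each of its vertices is. *)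

From mathcomp Require Import all_boot.
Set Implicit Arguments. Unset Strict Implicit. Unset Printing Implicit Defensive.

Definition simple_graph (T : finType) (e : rel T) : Prop :=
  irreflexive e /\ symmetric e /\ 0 < #|T|.

Definition graph_param := forall (T : finType), rel T -> {set T} -> Prop.

Definition graph_iso (T1 T2 : finType) (e1 : rel T1) (e2 : rel T2)
  (f : T1 -> T2) : Prop :=
  bijective f /\ forall x y, e2 (f x) (f y) = e1 x y.

Definition super_X_param (X : graph_param) : Prop :=
  (forall (T1 T2 : finType) (e1 : rel T1) (e2 : rel T2) (f : T1 -> T2),
      simple_graph e1 -> simple_graph e2 -> graph_iso e1 e2 f ->
      forall S : {set T1}, X T1 e1 S -> X T2 e2 (f @: S)) /\
  (forall (T : finType) (e : rel T), simple_graph e ->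
      exists S : {set T}, X T e S) /\
  (forall (T : finType) (e : rel T), simple_graph e ->
      forall S S' : {set T}, X T e S -> S \subset S' -> X T e S').

Definition symdiff (T : finType) (A B : {set T}) : {set T} :=
  (A :\: B) :|: (B :\: A).

Definition tar_adj (T : finType) (S1 S2 : {set T}) : Prop :=
  #|symdiff S1 S2| = 1.

Definition tar_automorphism (X : graph_param) (T : finType) (e : rel T)
  (f : {set T} -> {set T}) : Prop :=
  (forall S, X T e S -> X T e (f S)) /\
  (forall S1 S2, X T e S1 -> X T e S2 -> f S1 = f S2 -> S1 = S2) /\
  (forall S2, X T e S2 -> exists2 S1, X T e S1 & f S1 = S2) /\
  (forall S1 S2, X T e S1 -> X T e S2 ->
      (tar_adj (f S1) (f S2) <-> tar_adj S1 S2)).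

Definition minimal_X_set (X : graph_param) (T : finType) (e : rel T)
  (S : {set T}) : Prop :=
  X T e S /\ forall S' : {set T}, S' \proper S -> ~ X T e S'.

Definition X_irrelevant_vertex (X : graph_param) (T : finType) (e : rel T)
  (v : T) : Prop :=
  forall S : {set T}, minimal_X_set X e S -> v \notin S.

Definition X_irrelevant (X : graph_param) (T : finType) (e : rel T)
  (R : {set T}) : Prop :=
  forall v, v \in R -> X_irrelevant_vertex X e v.

(* Minimal X-sets avoid R exactly when R is X-irrelevant.  If they do, every
   X-set S contains a minimal X-set M disjoint from R, and M stays inside
   S (+) R, so by the superset property nu_R maps X-sets to X-sets; being an
   involution that preserves |S1 (+) S2|, it is then an automorphism.
   Conversely, if a minimal X-set M meets R, then M :|: R is an X-set whose
   image M :\: R is a proper subset of M, hence not an X-set. *)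
From mathcomp Require Import all_boot.
From Stdlib Require Import Classical.

Lemma symdiffK {T : finType} (R : {set T}) :
  involutive (fun S : {set T} => symdiff S R).
Proof.
move=> S; apply/setP => x; rewrite /symdiff !inE.
by case: (x \in S); case: (x \in R).
Qed.

Lemma symdiff_cancel (T : finType) (A B R : {set T}) :
  symdiff (symdiff A R) (symdiff B R) = symdiff A B.
Proof.
apply/setP => x; rewrite /symdiff !inE.
by case: (x \in A); case: (x \in B); case: (x \in R).
Qed.

Lemma symdiff_setUr (T : finType) (M R : {set T}) :
  symdiff (M :|: R) R = M :\: R.
Proof.
apply/setP => x; rewrite /symdiff !inE.
by case: (x \in M); case: (x \in R).
Qed.

Section TarSymdiff.

Variables (X : graph_param) (T : finType) (e : rel T).

Lemma X_set_has_minimal_subset (S : {set T}) :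
  X T e S -> exists2 M, minimal_X_set X e M & M \subset S.
Proof.
elim: {S}#|S| {-2}S (leqnn #|S|) => [|n IHn] S leSn XS.
  exists S => //; split=> // S' /proper_card.
  by move: leSn; rewrite leqn0 => /eqP ->.
(* X is Prop-valued, so whether S has a proper X-subset is not decidable. *)
have [[S' [ltS'S XS']] | noX] :=
  classic (exists S' : {set T}, S' \proper S /\ X T e S').
  have [|M minM subMS'] := IHn S' _ XS'.
    by rewrite -ltnS (leq_trans (proper_card ltS'S)).
  by exists M; last exact: subset_trans subMS' (proper_sub ltS'S).
by exists S => //; split=> // S' ltS'S XS'; apply: noX; exists S'.
Qed.

Lemma tar_automorphism_symdiff (R : {set T}) :
  (forall S, X T e S -> X T e (symdiff S R)) ->
  tar_automorphism X e (fun S : {set T} => symdiff S R).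
Proof.
move=> closedR; split; first exact: closedR.
split; first by move=> S1 S2 _ _ eq12; rewrite -[S1](symdiffK R) eq12 symdiffK.
split; first by move=> S XS; exists (symdiff S R); [exact: closedR | exact: symdiffK].
by move=> S1 S2 _ _; rewrite /tar_adj symdiff_cancel.
Qed.

Hypothesis X_superset :
  forall S S' : {set T}, X T e S -> S \subset S' -> X T e S'.

Lemma X_irrelevant_symdiff_closed (R : {set T}) :
  X_irrelevant X e R -> forall S, X T e S -> X T e (symdiff S R).
Proof.
move=> irrR S XS; have [M minM subMS] := X_set_has_minimal_subset S XS.
apply: X_superset _ _ minM.1 _; apply/subsetP => x xM.
have xNR : x \notin R by apply/negP => xR; rewrite (negPf (irrR x xR M minM)) in xM.
by rewrite /symdiff !inE xNR (subsetP subMS x xM).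
Qed.

Lemma symdiff_closed_X_irrelevant (R : {set T}) :
  (forall S, X T e S -> X T e (symdiff S R)) -> X_irrelevant X e R.
Proof.
move=> closedR v vR M [XM minM]; apply/negP => vM.
have := closedR _ (X_superset _ _ XM (subsetUl M R)).
rewrite symdiff_setUr; apply: minM.
rewrite properE subDset subsetUr /=.
by apply/subsetPn; exists v; rewrite // inE vR.
Qed.

End TarSymdiff.

Theorem theorem2p23 (X : graph_param) (hX : super_X_param X)
  (T : finType) (e : rel T) (hG : simple_graph e) (R : {set T}) :
  tar_automorphism X e (fun S => symdiff S R) <-> X_irrelevant X e R.
Proof.
have [_ [_ superset]] := hX; have X_superset := superset T e hG.
split=> [[closedR _] | irrR].
  exact: symdiff_closed_X_irrelevant.
by apply: tar_automorphism_symdiff; apply: X_irrelevant_symdiff_closed.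
Qed.
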